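(* There exists a $4$-colored tiling of $\mathbb{R}^3$ all of whose tiles have volume $1$ and whose minimal distance equals $(12+8\sqrt2)^{-1/3}\approx0.350$.
   Context: A $k$-colored tiling of $\mathbb{R}^3$ is a locally finite collection of closed bounded connected tiles covering $\mathbb{R}^3$, distinct tiles intersecting only in their boundaries, each tile assigned one of $k$ colors. The minimal distance is the infimum of the Euclidean distances $|x-y|$ over $x\in T_i$, $y\in T_j$ with $i\neq j$ and $T_i,T_j$ of the same color. *)

From HB Require Import structures.
From mathcomp Require Import all_boot all_order all_algebra.
From mathcomp Require Import all_classical all_reals all_analysis.
Set Implicit Arguments. Unset Strict Implicit. Unset Printing Implicit Defensive.
Import Order.TTheory GRing.Theory Num.Theory.
Import numFieldNormedType.Exports.
Local Open Scope classical_set_scope.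
Local Open Scope ring_scope.

(* Points of R^3, as triples ((x, y), z).  The topology is the product
   topology (= the Euclidean one). *)
Definition pt3 (R : realType) := (R * R * R)%type.

Definition dist3 (R : realType) (p q : pt3 R) : R :=
  Num.sqrt ((p.1.1 - q.1.1) ^+ 2 + (p.1.2 - q.1.2) ^+ 2 + (p.2 - q.2) ^+ 2).

Definition vol3 (R : realType) (A : set (pt3 R)) : \bar R :=
  ((@lebesgue_measure R \x @lebesgue_measure R) \x @lebesgue_measure R)%E
    (A : set (measurableTypeR R * measurableTypeR R * measurableTypeR R)).

Definition bdry (R : realType) (A : set (pt3 R)) : set (pt3 R) :=
  closure A `\` A^°.

Definition bounded3 (R : realType) (A : set (pt3 R)) : Prop :=
  exists (c : pt3 R) (r : R), forall p, A p -> dist3 c p <= r.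

Definition locally_finite3 (R : realType) (I : Type) (T : I -> set (pt3 R)) : Prop :=
  forall x : pt3 R, exists2 r : R, 0 < r &
    finite_set [set i | exists2 p, T i p & dist3 x p < r].

Definition tiling3 (R : realType) (I : Type) (T : I -> set (pt3 R)) : Prop :=
  [/\ locally_finite3 T,
      (forall i, closed (T i) /\ bounded3 (T i) /\ connected (T i)),
      (forall p : pt3 R, exists i, T i p) &
      (forall i j, i <> j -> T i `&` T j `<=` bdry (T i) `&` bdry (T j))].

Definition min_dist (R : realType) (I : Type) (k : nat)
    (T : I -> set (pt3 R)) (col : I -> 'I_k) : R :=
  inf [set d : R | exists i j (x y : pt3 R),
        [/\ i <> j, col i = col j, T i x, T j y & d = dist3 x y]].

From HB Require Import structures.
From mathcomp Require Import all_boot all_order all_algebra.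
From mathcomp Require Import all_classical all_reals all_analysis.
From mathcomp Require Import zify ring lra.
Set Implicit Arguments. Unset Strict Implicit. Unset Printing Implicit Defensive.
Import Order.TTheory GRing.Theory Num.Theory.
Import numFieldNormedType.Exports.
Local Open Scope classical_set_scope.
Local Open Scope ring_scope.

(* The construction works for every 0 < c <= 1/2.  Space is cut into
   horizontal layers of height c; each layer into rows of width 1 (consecutive
   layers shifted by 1/2 along y); each row into bricks of length c^-1
   (consecutive rows shifted by half a brick and consecutive layers by a quarter
   brick along x).  Indexing bricks by (m, r, k) in Z^3, the corner of brick (m, r, k) has lattice coordinates
   (4m + 2r + k, 2r + k, k) in units of (c^-1/4, 1/2, c), and it receives
   colour (m + 2r - k) mod 4.  An integer computation shows that two distinct
   bricks of the same colour are separated, along some axis, by a full gap of at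
   least one unit (c, 1/2 or c^-1/4 >= c), while bricks (0,0,0) and (0,-1,2)
   realise distance exactly c. *)

Section ProductTopology.
Variables T U : topologicalType.

Lemma continuous_pairl (b : U) : continuous (fun a : T => (a, b)).
Proof. by move=> a; apply: cvg_pair; [exact: cvg_id | exact: cvg_cst]. Qed.

Lemma continuous_pairr (a : T) : continuous (fun b : U => (a, b)).
Proof. by move=> b; apply: cvg_pair; [exact: cvg_cst | exact: cvg_id]. Qed.

Lemma closedX (A : set T) (B : set U) : closed A -> closed B -> closed (A `*` B).
Proof.
move=> cA cB; rewrite (_ : A `*` B = fst @^-1` A `&` snd @^-1` B) //.
apply: closedI; apply: preimage_closed => // -[x y] _.
- exact: cvg_fst.
- exact: cvg_snd.
Qed.

Lemma connectedX (A : set T) (B : set U) :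
  connected A -> connected B -> connected (A `*` B).
Proof.
move=> cA cB.
have [->|/set0P [a0 Aa0]] := eqVneq A set0; first by rewrite set0X; exact: connected0.
have [->|/set0P [b0 Bb0]] := eqVneq B set0; first by rewrite setX0; exact: connected0.
pose cross a := ((fun b => (a, b)) @` B) `|` ((fun x => (x, b0)) @` A).
have -> : A `*` B = \bigcup_(a in A) cross a.
  apply/seteqP; split=> [[x y] [/= Ax By]|z [a Aa [[y By <-]|[x Ax <-]]]] //.
  by exists x => //; left; exists y.
apply: bigcup_connected; first by exists (a0, b0) => a Aa; right; exists a0.
move=> a Aa; apply: connectedU.
- by exists (a, b0); split; [exists b0 | exists a].
- apply: connected_continuous_connected cB _.
  exact/continuous_subspaceT/continuous_pairr.
- apply: connected_continuous_connected cA _.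
  exact/continuous_subspaceT/continuous_pairl.
Qed.

Lemma interiorX_sub (A : set T) (B : set U) : (A `*` B)° `<=` A° `*` B°.
Proof.
move=> [x y] hAB; split=> /=.
- have hx : nbhs x ((fun a => (a, y)) @^-1` (A `*` B)) := continuous_pairl hAB.
  by apply: filterS hx => a [].
- have hy : nbhs y ((fun b => (x, b)) @^-1` (A `*` B)) := continuous_pairr hAB.
  by apply: filterS hy => b [].
Qed.

End ProductTopology.

Section Boxes.
Variable R : realType.

Definition box (x0 y0 z0 A B C : R) : set (pt3 R) :=
  `[x0, x0 + A] `*` `[y0, y0 + B] `*` `[z0, z0 + C].

Lemma boxP (x0 y0 z0 A B C : R) (p : pt3 R) :
  box x0 y0 z0 A B C p <->
  [/\ x0 <= p.1.1 <= x0 + A, y0 <= p.1.2 <= y0 + B & z0 <= p.2 <= z0 + C].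
Proof.
case: p => [[x y] z]; rewrite /box /setX /= !in_itv /=.
by split=> [[[-> ->] ->] | [-> -> ->]].
Qed.

Lemma interior_box (x0 y0 z0 A B C : R) (p : pt3 R) :
  (box x0 y0 z0 A B C)° p ->
  [/\ x0 < p.1.1 < x0 + A, y0 < p.1.2 < y0 + B & z0 < p.2 < z0 + C].
Proof.
move=> /interiorX_sub [/interiorX_sub [hx hy] hz].
move: hx hy hz; rewrite !interior_itv_bnd /= !in_itv /=.
by move=> -> -> ->.
Qed.

Lemma closed_box (x0 y0 z0 A B C : R) : closed (box x0 y0 z0 A B C).
Proof. by apply: closedX; [apply: closedX|]; exact: itv_closed. Qed.

Lemma connected_box (x0 y0 z0 A B C : R) : connected (box x0 y0 z0 A B C).
Proof. by apply: connectedX; [apply: connectedX|]; exact: segment_connected. Qed.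

Lemma vol_box (x0 y0 z0 A B C : R) : 0 <= A -> 0 <= B -> 0 <= C ->
  vol3 (box x0 y0 z0 A B C) = (A * B * C)%:E.
Proof.
have segE (t L : R) : 0 <= L -> lebesgue_measure `[t, t + L] = L%:E.
  move=> L0; rewrite lebesgue_measure_itv /= lte_fin ltrDl.
  case: ltgtP L0 => // [_ _ | <- _ //].
  by rewrite -EFinD addrAC subrr add0r.
move=> A0 B0 C0; rewrite /vol3 /box product_measure1E; last 2 first.
- by apply: measurableX; exact: measurable_itv.
- exact: measurable_itv.
rewrite EFinM; congr (_ * _)%E; last exact: segE.
rewrite EFinM -(segE x0) -?(segE y0) //.
by apply: product_measure1E; exact: measurable_itv.
Qed.

End Boxes.

Section Distance.
Variable R : realType.

Let sqrt_sum3_ge (u v w : R) : `|u| <= Num.sqrt (u ^+ 2 + v ^+ 2 + w ^+ 2).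
Proof.
rewrite -sqrtr_sqr; apply: ler_wsqrtr.
by rewrite -addrA lerDl addr_ge0 // sqr_ge0.
Qed.

Lemma dist3_ge_coord (p q : pt3 R) :
  [/\ `|p.1.1 - q.1.1| <= dist3 p q, `|p.1.2 - q.1.2| <= dist3 p q
    & `|p.2 - q.2| <= dist3 p q].
Proof.
split; rewrite /dist3; first exact: sqrt_sum3_ge.
- by rewrite (addrC (_ ^+ 2) (_ ^+ 2)); exact: sqrt_sum3_ge.
- by rewrite [X in Num.sqrt X]addrC addrA; exact: sqrt_sum3_ge.
Qed.

Let sqrt_sum3_le (u v w : R) :
  Num.sqrt (u ^+ 2 + v ^+ 2 + w ^+ 2) <= `|u| + `|v| + `|w|.
Proof.
have h0 : 0 <= `|u| + `|v| + `|w| by rewrite !addr_ge0.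
rewrite -(ger0_norm h0) -sqrtr_sqr; apply: ler_wsqrtr.
have -> : (`|u| + `|v| + `|w|) ^+ 2 = u ^+ 2 + v ^+ 2 + w ^+ 2
    + 2 * (`|u| * `|v| + `|u| * `|w| + `|v| * `|w|).
  by rewrite -[u ^+ 2]real_normK ?num_real // -[v ^+ 2]real_normK ?num_real //
    -[w ^+ 2]real_normK ?num_real //; ring.
by rewrite lerDl mulr_ge0 // !addr_ge0 // mulr_ge0.
Qed.

(* A box is bounded: its points are within l1 distance A + B + C of a corner. *)
Lemma bounded_box (x0 y0 z0 A B C : R) : 0 <= A -> 0 <= B -> 0 <= C ->
  bounded3 (box x0 y0 z0 A B C).
Proof.
move=> A0 B0 C0; exists (x0, y0, z0), (A + B + C).
move=> p /boxP [/andP[x1 x2] /andP[y1 y2] /andP[z1 z2]].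
apply: le_trans (sqrt_sum3_le _ _ _) _; rewrite /= (distrC x0) (distrC y0) (distrC z0).
by rewrite !ger0_norm ?subr_ge0 //; lra.
Qed.

End Distance.

Section LatticeSegments.
Variables (R : realType) (s : R).
Hypothesis s_gt0 : 0 < s.

Definition on_seg (u n : int) (t : R) : bool := s * u%:~R <= t <= s * (u + n)%:~R.

Definition in_seg (u n : int) (t : R) : bool := s * u%:~R < t < s * (u + n)%:~R.

Lemma on_segE (u n : int) (t : R) :
  on_seg u n t = (s * u%:~R <= t <= s * u%:~R + s * n%:~R).
Proof. by rewrite /on_seg intrD mulrDr. Qed.

Lemma in_segE (u n : int) (t : R) :
  in_seg u n t = (s * u%:~R < t < s * u%:~R + s * n%:~R).
Proof. by rewrite /in_seg intrD mulrDr. Qed.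

Let ler_scale (u v : int) : (s * u%:~R <= s * v%:~R) = (u <= v).
Proof. by rewrite ler_pM2l // ler_int. Qed.

Let ltr_scale (u v : int) : (s * u%:~R < s * v%:~R) = (u < v).
Proof. by rewrite ltr_pM2l // ltr_int. Qed.

Lemma seg_gap (u v n g : int) (x y : R) : n + g <= `|u - v| ->
  on_seg u n x -> on_seg v n y -> s * g%:~R <= `|x - y|.
Proof.
move=> huv /andP[x1 x2] /andP[y1 y2].
have sg (w : int) : s * (w + g)%:~R = s * w%:~R + s * g%:~R by rewrite intrD mulrDr.
have [vu|uv] : v + n + g <= u \/ u + n + g <= v by lia.
- have : s * (v + n + g)%:~R <= s * u%:~R by rewrite ler_scale.
  by rewrite sg => h; apply: le_trans (ler_norm _); lra.
- have : s * (u + n + g)%:~R <= s * v%:~R by rewrite ler_scale.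
  by rewrite sg distrC => h; apply: le_trans (ler_norm _); lra.
Qed.

Lemma seg_overlap (u v n : int) (t : R) :
  in_seg u n t -> on_seg v n t -> `|u - v| < n.
Proof.
move=> /andP[t1 t2] /andP[t3 t4].
have : u < v + n by rewrite -ltr_scale; exact: lt_le_trans t4.
have : v < u + n by rewrite -ltr_scale; exact: le_lt_trans t2.
lia.
Qed.

Lemma seg_cover (n b : int) (t : R) : 0 < n -> exists q : int, on_seg (n * q + b) n t.
Proof.
move=> n0; have n0' : 0 < n%:~R :> R by rewrite ltr0z.
pose r := (t / s - b%:~R) / n%:~R; exists (Num.floor r).
have /andP[r1 r2] := floor_itv r.
have ht : t = s * (n%:~R * r + b%:~R).
  by rewrite /r; field; rewrite !gt_eqF.
rewrite /on_seg ht !intrD !intrM ler_pM2l // ler_pM2l //.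
rewrite intrD in r2; apply/andP; split.
- by rewrite lerD2r ler_pM2l.
- by rewrite -addrA (addrC b%:~R) addrA lerD2r -[X in _ + X]mulr1 -mulrDr ler_pM2l // ltW.
Qed.

Lemma seg_bound (u n : int) (t x : R) : 0 <= n ->
  on_seg u n t -> `|t - x| < 1 -> `|u%:~R| <= (`|x| + 1) / s + n%:~R.
Proof.
move=> n0 /andP[t1 t2]; rewrite ltr_norml => /andP[d1 d2].
have sn : 0 <= s * n%:~R by apply: mulr_ge0; [exact: ltW | rewrite ler0z].
have eK : s * ((`|x| + 1) / s) = `|x| + 1 by rewrite mulrC divfK ?gt_eqF.
have := ler_norm x; have := lerNnormlW (lexx `|x|).
move: t2; rewrite intrD mulrDr => t2 hx hx'.
rewrite ler_norml; apply/andP; split; rewrite -(ler_pM2l s_gt0) ?mulrN mulrDr eK; lra.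
Qed.

End LatticeSegments.

Definition I3 := (int * int * int)%type.

Definition latX (i : I3) : int := 4 * i.1.1 + 2 * i.1.2 + i.2.
Definition latY (i : I3) : int := 2 * i.1.2 + i.2.
Definition latZ (i : I3) : int := i.2.

Definition colour (i : I3) : 'I_4 := inord `|((i.1.1 + 2 * i.1.2 - i.2) %% 4)%Z|%N.

Lemma same_colour_far (i j : I3) : i <> j -> colour i = colour j ->
  2 <= `|latZ i - latZ j| \/ 3 <= `|latY i - latY j| \/ 5 <= `|latX i - latX j|.
Proof.
have lt4 (e : int) : (`|(e %% 4)%Z| < 4)%N by lia.
move=> + /(congr1 val); rewrite /colour /= !inordK ?lt4 //.
case: i j => [[m r] k] [[m' r'] k'] /= ne_ij same_res.
have : ~ (m = m' /\ r = r' /\ k = k').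
  by move=> [eqm [eqr eqk]]; apply: ne_ij; rewrite eqm eqr eqk.
rewrite /latX /latY /latZ /=; lia.
Qed.

Lemma lattice_near_eq (i j : I3) : `|latX i - latX j| < 4 ->
  `|latY i - latY j| < 2 -> `|latZ i - latZ j| < 1 -> i = j.
Proof.
case: i j => [[m r] k] [[m' r'] k']; rewrite /latX /latY /latZ /= => hX hY hZ.
have eqk : k = k' by lia.
have eqr : r = r' by lia.
have eqm : m = m' by lia.
by rewrite eqm eqr eqk.
Qed.

Lemma finite_lattice_ball (K : nat) : finite_set
  [set i : I3 | `|latX i| <= K%:Z /\ `|latY i| <= K%:Z /\ `|latZ i| <= K%:Z].
Proof.
pose shift (t : 'I_K.*2.+1 * 'I_K.*2.+1 * 'I_K.*2.+1) : I3 :=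
  (t.1.1%:Z - K%:Z, t.1.2%:Z - K%:Z, t.2%:Z - K%:Z).
apply: (sub_finite_set _ (finite_image shift (@finite_finset _ setT))).
move=> [[m r] k]; rewrite /latX /latY /latZ /= => -[hX [hY hZ]].
exists (inord (absz (m + K%:Z)), inord (absz (r + K%:Z)), inord (absz (k + K%:Z))) => //.
rewrite /shift /= !inordK; try lia.
congr (_, _, _); lia.
Qed.

Lemma inf_attained (R : realType) (E : set R) (m : R) : E m -> lbound E m -> inf E = m.
Proof.
move=> Em lbm; apply/le_anti/andP; split.
- by apply: (ge_inf _ Em); exists m.
- by apply: lb_le_inf => //; exists m.
Qed.

Section BrickTiling.
Variables (R : realType) (c : R).
Hypotheses (c_gt0 : 0 < c) (c_le_half : c <= 2^-1).

Definition brick (i : I3) : set (pt3 R) :=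
  box (c^-1 / 4 * (latX i)%:~R) (2^-1 * (latY i)%:~R) (c * (latZ i)%:~R) c^-1 1 c.

Let cinv_gt0 : 0 < c^-1 / 4. Proof. by rewrite divr_gt0 // invr_gt0. Qed.
Let half_gt0 : 0 < 2^-1 :> R. Proof. by rewrite invr_gt0. Qed.
Let side_x : c^-1 / 4 * 4%:~R = c^-1. Proof. by rewrite divfK. Qed.
Let side_y : 2^-1 * 2%:~R = 1 :> R. Proof. by rewrite mulVf. Qed.
Let side_z : c * 1%:~R = c. Proof. by rewrite mulr1. Qed.

Lemma brickP (i : I3) (p : pt3 R) : brick i p <->
  [/\ on_seg (c^-1 / 4) (latX i) 4 p.1.1, on_seg 2^-1 (latY i) 2 p.1.2
    & on_seg c (latZ i) 1 p.2].
Proof. by rewrite /brick boxP !on_segE side_x side_y side_z. Qed.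

Lemma interior_brick (i : I3) (p : pt3 R) : (brick i)° p ->
  [/\ in_seg (c^-1 / 4) (latX i) 4 p.1.1, in_seg 2^-1 (latY i) 2 p.1.2
    & in_seg c (latZ i) 1 p.2].
Proof. by move=> /interior_box; rewrite !in_segE side_x side_y side_z. Qed.

Lemma brick_volume (i : I3) : vol3 (brick i) = 1%E.
Proof. by rewrite vol_box ?invr_ge0 ?ltW // mulr1 mulVf // gt_eqF. Qed.

(* Every point of space lies in some brick: choose the layer, then the row
   inside the layer, then the brick inside the row. *)
Lemma brick_cover (p : pt3 R) : exists i, brick i p.
Proof.
have [k hk] := seg_cover c_gt0 0 p.2 ltr01.
have [r hr] := seg_cover half_gt0 k p.1.2 (ltr0Sn _ 1).
have [m hm] := seg_cover cinv_gt0 (2 * r + k) p.1.1 (ltr0Sn _ 3).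
exists (m, r, k); apply/brickP; rewrite /latX /latY /latZ /= -addrA.
by rewrite mul1r addr0 in hk.
Qed.

Lemma brick_interior_unique (i j : I3) (p : pt3 R) :
  (brick i)° p -> brick j p -> i = j.
Proof.
move=> /interior_brick [hx hy hz] /brickP [hx' hy' hz'].
exact: lattice_near_eq (seg_overlap cinv_gt0 hx hx') (seg_overlap half_gt0 hy hy')
  (seg_overlap c_gt0 hz hz').
Qed.

Lemma brick_overlap (i j : I3) : i <> j ->
  brick i `&` brick j `<=` bdry (brick i) `&` bdry (brick j).
Proof.
move=> ij p [hi hj]; split; split; try exact: subset_closure.
- by move=> /brick_interior_unique /(_ hj).
- by move=> /brick_interior_unique /(_ hi) ji; exact: ij.
Qed.

Let int_le_archi (u : int) (B : R) :
  `|u%:~R : R| <= B -> `|u| <= (Num.Def.archi_bound B)%:Z.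
Proof.
move=> hB; rewrite -(ler_int R) intr_norm; apply/ltW/le_lt_trans/archi_boundP => //.
exact: le_trans hB.
Qed.

(* Only finitely many bricks meet the unit ball around any point, since their
   lattice coordinates are bounded in terms of the centre. *)
Lemma brick_locally_finite : locally_finite3 brick.
Proof.
move=> x; exists 1; first exact: ltr01.
pose B := (`|x.1.1| + 1) / (c^-1 / 4) + 4%:~R + ((`|x.1.2| + 1) / 2^-1 + 2%:~R)
  + ((`|x.2| + 1) / c + 1%:~R).
apply: (sub_finite_set _ (finite_lattice_ball (Num.Def.archi_bound B))).
move=> i [p /brickP [hx hy hz] dxp] /=.
have [dx dy dz] := dist3_ge_coord x p.
rewrite (distrC x.1.1) in dx; rewrite (distrC x.1.2) in dy; rewrite (distrC x.2) in dz.
have bx := seg_bound cinv_gt0 (n := 4) isT hx (le_lt_trans dx dxp).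
have by_ := seg_bound half_gt0 (n := 2) isT hy (le_lt_trans dy dxp).
have bz := seg_bound c_gt0 (n := 1) isT hz (le_lt_trans dz dxp).
have := normr_ge0 ((latX i)%:~R : R); have := normr_ge0 ((latY i)%:~R : R).
have := normr_ge0 ((latZ i)%:~R : R) => nz ny nx.
by split; [|split]; apply: int_le_archi; rewrite /B; lra.
Qed.

Lemma brick_tiling : tiling3 brick.
Proof.
split; [exact: brick_locally_finite | | exact: brick_cover | exact: brick_overlap].
move=> i; split; [exact: closed_box | split; last exact: connected_box].
by apply: bounded_box; rewrite ?invr_ge0 ?ltW.
Qed.

Lemma brick_colour_sep (i j : I3) (p q : pt3 R) : i <> j -> colour i = colour j ->
  brick i p -> brick j q -> c <= dist3 p q.
Proof.
move=> ij cij /brickP [px py pz] /brickP [qx qy qz].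
have [dx dy dz] := dist3_ge_coord p q.
have c_le_x : c <= c^-1 / 4.
  (* c <= c^-1 / 4 amounts to 4 c^2 <= 1. *)
  rewrite ler_pdivlMr // -(ler_pM2l c_gt0) mulfV ?gt_eqF // mulrA.
  have := ler_pM (ltW c_gt0) (ltW c_gt0) c_le_half c_le_half; lra.
case: (same_colour_far ij cij) => [fz|[fy|fx]].
- apply: le_trans dz; have := seg_gap c_gt0 (n := 1) (g := 1) fz pz qz.
  by rewrite mulr1.
- apply: le_trans c_le_half (le_trans _ dy); have := seg_gap half_gt0 (n := 2) (g := 1) fy py qy.
  by rewrite mulr1.
- apply: le_trans c_le_x (le_trans _ dx); have := seg_gap cinv_gt0 (n := 4) (g := 1) fx px qx.
  by rewrite mulr1.
Qed.

(* The bound c is attained between the bricks (0,0,0) and (0,-1,2), which have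
   the same colour and sit one layer apart in the same column. *)
Lemma brick_min_dist : min_dist brick colour = c.
Proof.
apply: inf_attained; last first.
  by move=> d [i [j [p [q [ij cij pi qj ->]]]]]; exact: brick_colour_sep pi qj.
exists (0, 0, 0), (0, -1, 2), (0, 0, c), (0, 0, 2 * c); split => //.
- apply/boxP; rewrite /latX /latY /latZ /= !mulr0 !add0r.
  by rewrite !lexx ler01 invr_ge0 ltW.
- rewrite /brick; have [-> ->] : latX (0, -1, 2) = 0 /\ latY (0, -1, 2) = 0 by [].
  apply/boxP; rewrite /latZ /= !mulr0 !add0r; change (2%:~R : R) with (2 : R).
  by rewrite !lexx ler01 invr_ge0 ltW // mulrC lexx lerDl ltW.
- rewrite /dist3 /= subrr expr0n /= !add0r (_ : c - 2 * c = - c); last by ring.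
  by rewrite sqrrN sqrtr_sqr gtr0_norm.
Qed.

End BrickTiling.

(* The constant of the theorem: since 12 + 8 sqrt 2 >= 8, its inverse cube
   root lies in (0, 1/2]. *)
Lemma inv_cbrt_bound (R : realType) (x : R) : 8 <= x ->
  0 < x `^ (- 3^-1) /\ x `^ (- 3^-1) <= 2^-1.
Proof.
move=> x8; have x0 : 0 < x by lra.
set c := x `^ _; have c0 : 0 < c by exact: powR_gt0.
split=> //.
have c3 : c ^+ 3 = x^-1.
  rewrite -powR_mulrn ?ltW // -powRrM mulNr mulVf ?pnatr_eq0 // powRN powRr1 //.
  exact: ltW.
have : c ^+ 3 <= 8^-1 by rewrite c3 lef_pV2 ?posrE.
rewrite !exprS expr0 mulr1; nra.
Qed.

Theorem mainTheorem13 (R : realType) :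
  exists (I : Type) (T : I -> set (pt3 R)) (col : I -> 'I_4),
    [/\ tiling3 T,
        (forall i, vol3 (T i) = 1%E) &
        min_dist T col = (12 + 8 * Num.sqrt 2) `^ (- (3^-1))].
Proof.
set c := (12 + 8 * Num.sqrt 2 : R) `^ (- 3^-1).
have [c_gt0 c_le_half] : 0 < c /\ c <= 2^-1.
  by apply: inv_cbrt_bound; have := sqrtr_ge0 (2 : R); lra.
exists I3, (brick c), colour; split.
- exact: brick_tiling c_gt0.
- exact: brick_volume c_gt0.
- exact: brick_min_dist c_gt0 c_le_half.
Qed.
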